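(* Let $G$ be a finite simple graph with at least one edge. Then $\mathrm{v}(I(G))\le\beta(G)$. Moreover, $\mathrm{v}(I(G))=\beta(G)$ if and only if every connected component of $G$ that has at least one edge is a star graph $K_{1,m}$ for some $m\ge1$.
   Context: For a graph $G$, $R=\mathbb{K}[V(G)]$ is the polynomial ring over a field $\mathbb{K}$ in the vertices, and $I(G)=(x_ix_j\mid\{x_i,x_j\}\in E(G))$ is the edge ideal. The v-number of a proper graded ideal $I\subseteq R$ is $\mathrm{v}(I)=\min\{d\ge0\mid\exists f\in R_d,\ \mathfrak p\in\mathrm{Ass}(I),\ I:(f)=\mathfrak p\}$. A vertex cover of $G$ is a set $C\subseteq V(G)$ meeting every edge; $\beta(G)$ is the minimum size of a vertex cover. The star graph $K_{1,m}$ has vertices $x_0,x_1,\ldots,x_m$ and edges $\{x_0,x_i\}$, $1\le i\le m$. *)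

From HB Require Import structures.
From mathcomp Require Import all_boot all_order all_algebra.
From mathcomp Require Import mpoly.
Set Implicit Arguments. Unset Strict Implicit. Unset Printing Implicit Defensive.
Import GRing.Theory.
Local Open Scope ring_scope.

(* A graph on vertex set 'I_n = {x_0,...,x_{n-1}} is given by a relation e;
   it is a finite simple graph when e is symmetric and irreflexive. *)
Definition simple_graph (n : nat) (e : rel 'I_n) : Prop :=
  (forall x y, e x y = e y x) /\ (forall x, ~~ e x x).

Definition pset (K : fieldType) (n : nat) := {mpoly K[n]} -> Prop.

Definition edge_ideal (K : fieldType) (n : nat) (e : rel 'I_n) : pset K n :=
  fun f => exists g : 'I_n -> 'I_n -> {mpoly K[n]},
    f = \sum_(i < n) \sum_(j < n | e i j) g i j * ('X_i * 'X_j).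

Definition is_ideal (K : fieldType) (n : nat) (P : pset K n) : Prop :=
  P 0 /\ (forall a b, P a -> P b -> P (a + b)) /\ (forall r a, P a -> P (r * a)).

Definition is_prime_ideal (K : fieldType) (n : nat) (P : pset K n) : Prop :=
  is_ideal P /\ ~ P 1 /\ (forall a b, P (a * b) -> P a \/ P b).

Definition colon (K : fieldType) (n : nat) (I : pset K n) (f : {mpoly K[n]}) : pset K n :=
  fun g => I (g * f).

Definition Ass (K : fieldType) (n : nat) (I : pset K n) (P : pset K n) : Prop :=
  is_prime_ideal P /\ exists f : {mpoly K[n]}, forall g, P g <-> colon I f g.

Definition vnum_at (K : fieldType) (n : nat) (I : pset K n) (d : nat) : Prop :=
  exists f : {mpoly K[n]}, f \is d.-homog /\
    exists P : pset K n, Ass I P /\ (forall g, colon I f g <-> P g).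

Definition is_vnumber (K : fieldType) (n : nat) (I : pset K n) (v : nat) : Prop :=
  vnum_at I v /\ forall d, vnum_at I d -> (v <= d)%N.

Definition vertex_cover (n : nat) (e : rel 'I_n) (C : {set 'I_n}) : bool :=
  [forall i, forall j, e i j ==> (i \in C) || (j \in C)].

Definition beta (n : nat) (e : rel 'I_n) : nat :=
  \big[minn/n]_(C : {set 'I_n} | vertex_cover e C) #|C|.

Definition component (n : nat) (e : rel 'I_n) (x : 'I_n) : {set 'I_n} :=
  [set y | connect e x y].

Definition has_edge_in (n : nat) (e : rel 'I_n) (C : {set 'I_n}) : Prop :=
  exists y z, [/\ y \in C, z \in C & e y z].

(* The induced graph on C is a star K_{1,m} (m = #|C| - 1): some center c in C
   such that two vertices of C are adjacent iff exactly one of them is c.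
   (m >= 1 is automatic once C contains an edge.) *)
Definition is_star_on (n : nat) (e : rel 'I_n) (C : {set 'I_n}) : Prop :=
  exists2 c, c \in C &
    forall y z, y \in C -> z \in C -> e y z = ((y == c) != (z == c)).

(* v(I(G)) is the least size of a stable set A whose neighbourhood N(A) is a
   vertex cover.  For such an A the colon ideal I(G) : x^A is the kernel of the
   substitution killing the variables of N(A), hence prime; conversely, if
   I(G) : f is prime, a monomial of f outside I(G) has a stable support A, of
   size at most deg f, and primality forces N(A) to cover every edge.

   Sending each vertex of a minimum vertex cover C to a neighbour outside C
   gives such an A with |A| <= |C| = beta(G).  If two vertices of C share an
   outside neighbour, or C contains an edge, the construction can be made
   strictly smaller; if neither happens, every component with an edge is a
   star centred in C.  Conversely, when all those components are stars, the
   centres of the components of the vertices of A form a vertex cover of size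
   at most |A|. *)

From HB Require Import structures.
From mathcomp Require Import all_boot all_order all_algebra.
From mathcomp Require Import mpoly.
From mathcomp Require Import zify.
Set Implicit Arguments. Unset Strict Implicit. Unset Printing Implicit Defensive.
Import Order.TTheory GRing.Theory.
Local Open Scope ring_scope.

Lemma is_prime_ideal_kernel (K : fieldType) (n : nat) (S : idomainType)
    (f : {rmorphism {mpoly K[n]} -> S}) :
  is_prime_ideal (fun g => f g = 0).
Proof.
split; [split; [|split] | split].
- exact: rmorph0.
- by move=> a b /= fa fb; rewrite rmorphD fa fb addr0.
- by move=> r a /= fa; rewrite rmorphM fa mulr0.
- by rewrite /= rmorph1 => /eqP; rewrite oner_eq0.
- by move=> a b /=; rewrite rmorphM => /eqP; rewrite mulf_eq0 => /orP[] /eqP; [left|right].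
Qed.

Section Graph.
Variables (n : nat) (e : rel 'I_n).
(* [symmetric] alone would refer to mpoly's predicate on polynomials. *)
Hypotheses (e_sym : ssrbool.symmetric e) (e_irr : irreflexive e).
Implicit Types (C D T : {set 'I_n}) (m : 'X_{1..n}).

Definition stable_set (T : {set 'I_n}) : bool :=
  [forall t1 in T, forall t2 in T, ~~ e t1 t2].

Definition nbhd (T : {set 'I_n}) : {set 'I_n} := [set x | [exists t in T, e x t]].

Definition nbhd_cover_stable (T : {set 'I_n}) : bool :=
  stable_set T && vertex_cover e (nbhd T).

Lemma stable_setP T : reflect {in T &, forall t1 t2, ~~ e t1 t2} (stable_set T).
Proof.
apply: (iffP forall_inP) => [st t1 t2 /st /forall_inP|st t1 t1T]; first exact.
by apply/forall_inP => t2; apply: st.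
Qed.

Lemma vertex_coverP C :
  reflect (forall i j, e i j -> (i \in C) || (j \in C)) (vertex_cover e C).
Proof.
apply: (iffP forallP) => [cov i j eij|cov i].
  by have /forallP/(_ j)/implyP := cov i; apply.
by apply/forallP=> j; apply/implyP/cov.
Qed.

Definition mnm_supp (m : 'X_{1..n}) : {set 'I_n} := [set i | (0 < m i)%N].

Lemma card_mnm_supp m : (#|mnm_supp m| <= mdeg m)%N.
Proof.
rewrite mdegE -sum1_card [leqLHS]big_mkcond /=.
by apply: leq_sum => i _; rewrite inE; case: posnP.
Qed.

Definition edge_divisible (m : 'X_{1..n}) : bool :=
  [exists i, exists j, [&& e i j, (0 < m i)%N & (0 < m j)%N]].

Lemma stable_mnm_supp m : stable_set (mnm_supp m) = ~~ edge_divisible m.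
Proof.
apply/stable_setP/idP => [st|nem i j].
  apply/existsP => -[i /existsP[j /and3P[eij mi mj]]].
  by move: (st i j); rewrite !inE eij => /(_ mi mj).
rewrite !inE => mi mj; apply: contra nem => eij.
by apply/existsP; exists i; apply/existsP; exists j; rewrite eij mi mj.
Qed.

Lemma nbhd_mnm_supp x m : ~~ edge_divisible m -> edge_divisible (U_(x) + m)%MM ->
  x \in nbhd (mnm_supp m).
Proof.
move=> nem /existsP[i /existsP[j /and3P[eij]]].
wlog mi0 : i j eij / m i = 0%N.
  move=> wl Hi Hj; have [mi0|mi] := posnP (m i); first exact: wl eij mi0 Hi Hj.
  have [mj0|mj] := posnP (m j); first by apply: (wl j i); rewrite // e_sym.
  by case/negP: nem; apply/existsP; exists i; apply/existsP; exists j; rewrite eij mi mj.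
rewrite !mnmDE !mnm1E mi0 addn0 lt0b => /eqP xi; subst i => Hj.
rewrite inE; apply/exists_inP; exists j; rewrite ?inE //.
by move: Hj; case: (x =P j) => [xj|_]; [rewrite xj e_irr in eij | rewrite add0n].
Qed.

Section EdgeIdeal.
Variable K : fieldType.
Local Notation I := (@edge_ideal K n e).

Lemma edge_ideal_edge r i j : e i j -> I (r * ('X_i * 'X_j)).
Proof.
move=> eij; exists (fun a b => if (a == i) && (b == j) then r else 0).
rewrite (bigD1 i) //= (bigD1 j) //= !eqxx big1 ?addr0 => [|b /andP[_ /negbTE ->]];
  last by rewrite mul0r.
rewrite [X in _ = _ + X]big1 ?addr0 // => a /negbTE ane.
by rewrite big1 // => b _; rewrite ane mul0r.
Qed.

Lemma edge_ideal_mono c m : edge_divisible m -> I (c *: 'X_[m]).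
Proof.
case/existsP=> i /existsP [j /and3P [eij mi mj]].
have ij : i != j by apply: contraTneq eij => ->; rewrite e_irr.
pose m' := [multinom (m k - (i == k) - (j == k))%N | k < n].
have -> : m = (m' + (U_(i) + U_(j)))%MM.
  apply/mnmP=> k; rewrite !mnmDE !mnmE.
  case: (i =P k) => [ik|_]; case: (j =P k) => [jk|_] /=.
  - by move: ij; rewrite ik jk eqxx.
  - by rewrite -ik; move: mi; clear; lia.
  - by rewrite -jk; move: mj; clear; lia.
  - by clear; lia.
by rewrite !mpolyXD scalerAl; apply: edge_ideal_edge.
Qed.

Lemma edge_idealP a : I a <-> {in msupp a, forall m, edge_divisible m}.
Proof.
split=> [[g ->]|H].
  elim/big_ind: _ => [|x y Hx Hy|i _]; first by move=> m; rewrite msupp0.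
    by move=> m /msuppD_le; rewrite mem_cat => /orP[/Hx|/Hy].
  elim/big_ind: _ => [|x y Hx Hy|j eij]; first by move=> m; rewrite msupp0.
    by move=> m /msuppD_le; rewrite mem_cat => /orP[/Hx|/Hy].
  move=> m; rewrite -mpolyXD (perm_mem (msuppMX _ _)) => /mapP [m0 _ ->].
  apply/existsP; exists i; apply/existsP; exists j.
  by rewrite eij !mnmDE !mnm1E !eqxx !addn_gt0 orbT.
rewrite (mpolyE a) big_seq.
elim/big_ind: _ => [|x y [gx ->] [gy ->]|m /H /edge_ideal_mono //].
  by exists (fun _ _ => 0); rewrite big1 // => i _; rewrite big1 // => j _; rewrite mul0r.
exists (fun i j => gx i j + gy i j); rewrite -big_split; apply: eq_bigr => i _.
by rewrite -big_split; apply: eq_bigr => j _; rewrite mulrDl.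
Qed.

Lemma colon_monomialP (mu : 'X_{1..n}) g :
  colon I 'X_[mu] g <-> {in msupp g, forall m, edge_divisible (mu + m)%MM}.
Proof.
rewrite /colon edge_idealP; split=> H m.
  by move=> mg; apply: H; rewrite (perm_mem (msuppMX _ _)) map_f.
by rewrite (perm_mem (msuppMX _ _)) => /mapP [m0 /H + ->].
Qed.

Definition set_mnm (T : {set 'I_n}) : 'X_{1..n} := [multinom ((i \in T) : nat) | i < n].

Lemma mdeg_set_mnm T : mdeg (set_mnm T) = #|T|.
Proof.
rewrite mdegE -sum1_card [RHS]big_mkcond /=; apply: eq_bigr => i _.
by rewrite mnmE; case: (i \in T).
Qed.

Lemma edge_divisible_set_mnmD T m : nbhd_cover_stable T ->
  edge_divisible (set_mnm T + m)%MM = [exists y in nbhd T, (0 < m y)%N].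
Proof.
case/andP=> /stable_setP st /vertex_coverP cov; apply/idP/idP.
  case/existsP=> i /existsP[j /and3P[eij]]; rewrite !mnmDE !mnmE.
  case iT: (i \in T); case jT: (j \in T) => /= Hi Hj.
  - by move: (st i j iT jT); rewrite eij.
  - apply/exists_inP; exists j; rewrite // inE.
    by apply/exists_inP; exists i; rewrite // e_sym.
  - by apply/exists_inP; exists i; rewrite // inE; apply/exists_inP; exists j.
  - by case/orP: (cov i j eij) => ?; apply/exists_inP; [exists i | exists j].
case/exists_inP=> y; rewrite inE => /exists_inP[t tT eyt] my.
apply/existsP; exists y; apply/existsP; exists t.
by rewrite eyt !mnmDE !mnmE tT addn_gt0 my orbT.
Qed.

Definition nbhd_subst T (i : 'I_n) : {mpoly K[n]} := if i \in nbhd T then 0 else 'X_i.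

Local Notation kill_nbhd T := (mmap (@mpolyC n K) (nbhd_subst T)).

Lemma mmap1_nbhd_subst T m :
  mmap1 (nbhd_subst T) m = if [exists y in nbhd T, (0 < m y)%N] then 0 else 'X_[m].
Proof.
case: ifP => [/existsP [y /andP [yN my]]|H].
  rewrite /mmap1 (bigD1 y) //= /nbhd_subst yN expr0n.
  by move: my; rewrite lt0n => /negbTE ->; rewrite mul0r.
rewrite -mmap1_id; apply: eq_bigr => i _; rewrite /nbhd_subst.
case: ifP => // iN; suff -> : m i = 0%N by rewrite !expr0.
apply/eqP; rewrite eqn0Ngt; apply: contraFN H => mi.
by apply/existsP; exists i; rewrite iN.
Qed.

Lemma kill_nbhd_eq0 T g : kill_nbhd T g = 0 <->
  {in msupp g, forall m : 'X_{1..n}, [exists y in nbhd T, (0 < m y)%N]}.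
Proof.
split=> [H m mg|H]; last first.
  rewrite /mmap big_seq big1 // => m /H; rewrite mmap1_nbhd_subst => ->.
  by rewrite mulr0.
apply: contraT => Hm; move: (mg); rewrite mcoeff_msupp => /eqP[].
suff <- : (kill_nbhd T g)@_m = g@_m by rewrite H mcoeff0.
rewrite /mmap raddf_sum /= (bigD1_seq m) ?msupp_uniq //= big1.
  by rewrite addr0 mmap1_nbhd_subst (negbTE Hm) mul_mpolyC mcoeffZ mcoeffX eqxx mulr1.
move=> m' m'm; rewrite mmap1_nbhd_subst; case: ifP => _; first by rewrite mulr0 mcoeff0.
by rewrite mul_mpolyC mcoeffZ mcoeffX (negbTE m'm) mulr0.
Qed.

Lemma colon_set_mnm T g : nbhd_cover_stable T ->
  colon I 'X_[set_mnm T] g <-> kill_nbhd T g = 0.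
Proof.
move=> ncsT; rewrite colon_monomialP kill_nbhd_eq0.
by split=> H m /H; rewrite edge_divisible_set_mnmD.
Qed.

Lemma vnum_at_nbhd_cover_stable T : nbhd_cover_stable T -> vnum_at I #|T|.
Proof.
move=> ncsT; exists 'X_[set_mnm T].
split; first by rewrite dhomogX; apply/eqP; apply: mdeg_set_mnm.
exists (fun g => kill_nbhd T g = 0); split=> [|g]; last exact: colon_set_mnm.
split; first exact: is_prime_ideal_kernel.
by exists 'X_[set_mnm T] => g; rewrite colon_set_mnm.
Qed.

Lemma stable_of_vnum_at d :
  vnum_at I d -> exists2 T, nbhd_cover_stable T & (#|T| <= d)%N.
Proof.
case=> f [homf [P [[[_ [P1 P_prime]] _] fP]]].
have /hasP[m mf /= nem] : has (predC edge_divisible) (msupp f).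
  rewrite has_predC; apply/negP => /allP suppf; apply: P1.
  by apply/fP; rewrite /colon mul1r; apply/edge_idealP.
have var_nbhd x : P 'X_x -> x \in nbhd (mnm_supp m).
  move/fP; rewrite /colon mulrC => /edge_idealP /(_ (U_(x) + m)%MM).
  by rewrite (perm_mem (msuppMX _ _)) map_f // => /(_ isT) /(nbhd_mnm_supp nem).
exists (mnm_supp m); last by rewrite -(dhomog_mf homf mf) card_mnm_supp.
rewrite /nbhd_cover_stable stable_mnm_supp nem; apply/vertex_coverP => y z eyz.
have /P_prime[/var_nbhd ->|/var_nbhd ->] // : P ('X_y * 'X_z).
  by apply/fP; rewrite /colon mulrC; apply: edge_ideal_edge.
by rewrite orbT.
Qed.

End EdgeIdeal.

Lemma beta_le_cover C : vertex_cover e C -> (beta e <= #|C|)%N.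
Proof. by rewrite /beta -minEnat -leEnat; apply: bigmin_le_cond. Qed.

Lemma beta_attained : exists2 C, vertex_cover e C & #|C| = beta e.
Proof.
have coverT : vertex_cover e setT by apply/vertex_coverP => i j; rewrite inE.
have card_le C : (#|C| <= n)%N by rewrite (leq_trans (max_card _)) ?card_ord.
have [C coverC] := @eq_bigmin _ _ _ n setT _ (fun C => #|C|) coverT (fun C _ => card_le C).
by rewrite minEnat => beta_C; exists C.
Qed.

Lemma vertex_coverS C D : C \subset D -> vertex_cover e C -> vertex_cover e D.
Proof.
move=> /subsetP CD /vertex_coverP cov; apply/vertex_coverP => i j /cov.
by case/orP=> /CD ->; rewrite ?orbT.
Qed.

Lemma vertex_cover_nonadj C a b : vertex_cover e C -> a \notin C -> b \notin C -> ~~ e a b.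
Proof.
by move=> /vertex_coverP cov aC bC; apply/negP => /cov; rewrite (negbTE aC) (negbTE bC).
Qed.

Section MinimumCover.
Variable C : {set 'I_n}.
Hypotheses (C_cover : vertex_cover e C) (C_min : #|C| = beta e).

Lemma min_cover_outer_nbr c : c \in C -> exists s, (s \notin C) && e c s.
Proof.
move=> cC; apply/existsP; apply: contraT => /existsPn outer.
suff /beta_le_cover : vertex_cover e (C :\ c) by rewrite -C_min (cardsD1 c C) cC ltnn.
have nbr_c_in_C l : e c l -> l \in C.
  by move=> ecl; move: (outer l); rewrite ecl andbT negbK.
have neq k l : e k l -> k != l by move=> ekl; apply: contraTneq ekl => ->; rewrite e_irr.
apply/vertex_coverP => i j eij; rewrite !inE.
case/orP: (vertex_coverP _ C_cover i j eij) => [iC|jC].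
  move: eij; have [-> ecj|_ _] := eqVneq i c; last by rewrite iC.
  by rewrite eq_sym neq ?(nbr_c_in_C j).
move: eij; have [-> eic|_ _] := eqVneq j c; last by rewrite jC orbT.
by rewrite neq ?(nbr_c_in_C i) // e_sym.
Qed.

Definition outer_nbr c := odflt c [pick s | (s \notin C) && e c s].

Lemma outer_nbrP c : c \in C -> (outer_nbr c \notin C) && e c (outer_nbr c).
Proof.
move=> cC; rewrite /outer_nbr; case: pickP => [s //|none].
by have [s] := min_cover_outer_nbr cC; rewrite none.
Qed.

Lemma nbhd_cover_stable_imset (g : 'I_n -> 'I_n) :
  {in C, forall c, (g c \notin C) && e c (g c)} -> nbhd_cover_stable (g @: C).
Proof.
move=> gP; apply/andP; split.
  apply/stable_setP => _ _ /imsetP[c1 c1C ->] /imsetP[c2 c2C ->].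
  apply: vertex_cover_nonadj C_cover _ _.
    by case/andP: (gP _ c1C).
  by case/andP: (gP _ c2C).
apply: vertex_coverS C_cover; apply/subsetP => c cC; rewrite inE.
by case/andP: (gP _ cC) => gcC ecg; apply/exists_inP; exists (g c); rewrite ?imset_f.
Qed.

Lemma shared_outer_nbr_lt_beta s c1 c2 : s \notin C -> c1 \in C -> c2 \in C ->
  c1 != c2 -> e s c1 -> e s c2 -> exists2 T, nbhd_cover_stable T & (#|T| < beta e)%N.
Proof.
move=> sC c1C c2C c12 esc1 esc2.
pose g c := if c \in [set c1; c2] then s else outer_nbr c.
have gP : {in C, forall c, (g c \notin C) && e c (g c)}.
  move=> c cC; rewrite /g !inE.
  have [->|_] /= := eqVneq c c1; first by rewrite sC e_sym.
  have [->|_] /= := eqVneq c c2; first by rewrite sC e_sym.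
  exact: outer_nbrP.
exists (g @: C); first exact: nbhd_cover_stable_imset.
rewrite -C_min ltn_neqAle leq_imset_card andbT; apply: contra c12 => /imset_injP g_inj.
by apply/eqP; apply: g_inj; rewrite // /g !inE !eqxx ?orbT.
Qed.

Lemma inner_edge_lt_beta c1 c2 : c1 \in C -> c2 \in C -> e c1 c2 ->
  (forall s c c', s \notin C -> c \in C -> c' \in C -> e s c -> e s c' -> c = c') ->
  exists2 T, nbhd_cover_stable T & (#|T| < beta e)%N.
Proof.
move=> c1C c2C e12 no_shared.
have c12 : c1 != c2 by apply: contraTneq e12 => ->; rewrite e_irr.
(* With c1 in T, both c2 and every neighbour of c1 lie in N(T), so neither c1
   nor c2 needs an outer neighbour. *)
pose D := C :\ c1 :\ c2; pose T := c1 |: outer_nbr @: D.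
have memD c : c \in D = [&& c != c2, c != c1 & c \in C] by rewrite !inE.
have outer_D c : c \in D -> (outer_nbr c \notin C) && ~~ e (outer_nbr c) c1.
  rewrite memD => /and3P[_ cc1 cC]; have /andP[gC ecg] := outer_nbrP cC.
  rewrite gC; apply: contra cc1 => eg1; apply/eqP.
  by apply: (no_shared (outer_nbr c)); rewrite // e_sym.
exists T; last first.
  have -> : beta e = #|D|.+2.
    by rewrite -C_min (cardsD1 c1) c1C (cardsD1 c2) !inE eq_sym c12 c2C.
  rewrite (leq_ltn_trans (leq_card_setU _ _)) // cards1 ltnS.
  exact: leq_imset_card.
apply/andP; split.
  apply/stable_setP => t1 t2; rewrite !in_setU1.
  case/predU1P=> [->|/imsetP[d1 /outer_D/andP[g1C g1c1] ->]];
    case/predU1P=> [->|/imsetP[d2 /outer_D/andP[g2C g2c1] ->]] //.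
  - by rewrite e_irr.
  - by rewrite e_sym.
  - exact: vertex_cover_nonadj C_cover g1C g2C.
have c1T : c1 \in T by rewrite setU11.
suff cov a b : e a b -> a \in C -> (a \in nbhd T) || (b \in nbhd T).
  apply/vertex_coverP => a b eab.
  case/orP: (vertex_coverP _ C_cover a b eab) => [/(cov a b eab) //|bC].
  by rewrite orbC; apply: cov; rewrite // e_sym.
move=> eab aC; rewrite !inE.
have [ac1|ac1] := eqVneq a c1.
  by apply/orP; right; apply/exists_inP; exists c1; rewrite // e_sym -ac1.
have [ac2|ac2] := eqVneq a c2.
  by apply/orP; left; apply/exists_inP; exists c1; rewrite // ac2 e_sym.
have aD : a \in D by rewrite memD ac1 ac2.
apply/orP; left; apply/exists_inP; exists (outer_nbr a).
  by rewrite inE imset_f ?orbT.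
by case/andP: (outer_nbrP aC).
Qed.

End MinimumCover.

Lemma nbhd_cover_stable_le_beta : exists2 T, nbhd_cover_stable T & (#|T| <= beta e)%N.
Proof.
have [C C_cover C_min] := beta_attained.
exists (outer_nbr C @: C); last by rewrite -C_min leq_imset_card.
by apply: nbhd_cover_stable_imset => // c /(outer_nbrP C_cover C_min).
Qed.

Let e_connect_sym : connect_sym e := sym_connect_sym e_sym.

Lemma star_component_of_cover C x c : vertex_cover e C ->
  c \in C -> c \in component e x ->
  (forall s c c', s \notin C -> c \in C -> c' \in C -> e s c -> e s c' -> c = c') ->
  {in C &, forall c c', ~~ e c c'} -> is_star_on e (component e x).
Proof.
move=> C_cover cC cx no_shared no_inner.
pose S := c |: [set u | (u \notin C) && e c u].
have S_closed : closed e S.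
  apply: intro_closed => // u w euw; rewrite !inE.
  case/predU1P=> [uc|/andP[uC ecu]].
    subst u; apply/orP; right; rewrite euw andbT.
    by apply: (contraL _ euw) => wC; apply: no_inner.
  have wC : w \in C.
    by case/orP: (vertex_coverP _ C_cover u w euw); rewrite ?(negbTE uC).
  by apply/orP; left; apply/eqP/esym; apply: (no_shared u); rewrite // e_sym.
have in_S u : u \in component e x -> u \in S.
  rewrite [u \in component e x]inE => xu.
  have xc : connect e x c by rewrite inE in cx.
  have cu : connect e c u by rewrite (connect_trans _ xu) // e_connect_sym.
  by rewrite -(closed_connect S_closed cu) setU11.
have neq_c u : u \notin C -> (u == c) = false by move=> uC; apply: contraNF uC => /eqP ->.
exists c => // u w /in_S + /in_S; rewrite !inE.
case/predU1P=> [->|/andP[uC ecu]]; case/predU1P=> [->|/andP[wC ecw]].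
- by rewrite e_irr eqxx.
- by rewrite eqxx neq_c.
- by rewrite eqxx neq_c // e_sym.
- by rewrite !neq_c //; apply/negbTE/(vertex_cover_nonadj C_cover).
Qed.

Lemma star_components_of_beta_le :
  (forall T, nbhd_cover_stable T -> (beta e <= #|T|)%N) ->
  forall x, has_edge_in e (component e x) -> is_star_on e (component e x).
Proof.
move=> beta_le x [y [z [yx zx eyz]]].
have [C C_cover C_min] := beta_attained.
have not_lt T : nbhd_cover_stable T -> ~~ (#|T| < beta e)%N.
  by move=> /beta_le; rewrite leqNgt.
have no_shared s c c' : s \notin C -> c \in C -> c' \in C -> e s c -> e s c' -> c = c'.
  move=> sC cC c'C esc esc'; apply/eqP; apply: contraT => cc'.
  have [T /not_lt/negbTE] := shared_outer_nbr_lt_beta C_cover C_min sC cC c'C cc' esc esc'.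
  by move=> ->.
have no_inner : {in C &, forall c c', ~~ e c c'}.
  move=> c c' cC c'C; apply: contraT; rewrite negbK => ecc'.
  have [T /not_lt/negbTE] := inner_edge_lt_beta C_cover C_min cC c'C ecc' no_shared.
  by move=> ->.
have [c cC cx] : exists2 c, c \in C & c \in component e x.
  by case/orP: (vertex_coverP _ C_cover y z eyz) => ?; [exists y | exists z].
exact: star_component_of_cover C_cover cC cx no_shared no_inner.
Qed.

Definition star_centre (A : {set 'I_n}) c : bool :=
  [forall y in A, forall z in A, e y z == ((y == c) != (z == c))].

Definition centre t := odflt t [pick c in component e t | star_centre (component e t) c].

Lemma centreP t : is_star_on e (component e t) ->
  {in component e t &, forall y z, e y z = ((y == centre t) != (z == centre t))}.
Proof.
case=> c ct c_star; rewrite /centre.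
case: pickP => [c' /andP[_ /forall_inP st] y z yt zt|].
  by have /forall_inP/(_ z zt)/eqP := st y yt.
move/(_ c); rewrite ct /= => /negbT/negP[].
by apply/forall_inP => y yt; apply/forall_inP => z zt; rewrite c_star.
Qed.

Lemma beta_le_of_star_components T :
  (forall x, has_edge_in e (component e x) -> is_star_on e (component e x)) ->
  vertex_cover e (nbhd T) -> (beta e <= #|T|)%N.
Proof.
move=> stars /vertex_coverP T_cover.
apply: leq_trans (leq_imset_card centre T); apply: beta_le_cover.
suff cov y z : e y z -> y \in nbhd T -> (y \in centre @: T) || (z \in centre @: T).
  apply/vertex_coverP => y z eyz; case/orP: (T_cover y z eyz) => [/(cov y z eyz) //|].
  by move/(cov z y); rewrite e_sym orbC; apply.
move=> eyz; rewrite inE => /exists_inP[t tT eyt].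
have yt : y \in component e t by rewrite inE e_connect_sym connect1.
have zt : z \in component e t.
  by rewrite inE (connect_trans _ (connect1 eyz)) // e_connect_sym connect1.
have t_star : has_edge_in e (component e t) by exists y, z.
move: (centreP (stars t t_star) yt zt); rewrite eyz.
have ct : centre t \in centre @: T by rewrite imset_f.
have [->|_] := eqVneq y (centre t); first by rewrite ct.
by have [->|_] := eqVneq z (centre t); rewrite ?ct ?orbT.
Qed.

End Graph.

Theorem theorem4p1 (K : fieldType) (n : nat) (e : rel 'I_n) :
  simple_graph e ->
  (exists i j, e i j) ->
  exists v : nat,
    is_vnumber (@edge_ideal K n e) v /\
    (v <= beta e)%N /\
    (v = beta e <->
       forall x : 'I_n, has_edge_in e (component e x) ->
         is_star_on e (component e x)).
Proof.
move=> [e_sym e_nirr] _; have e_irr : irreflexive e := fun x => negbTE (e_nirr x).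
have [T0 T0_ncs T0_le] := nbhd_cover_stable_le_beta e_sym e_irr.
have sizes : exists d, [exists T, nbhd_cover_stable e T && (#|T| == d)].
  by exists #|T0|; apply/existsP; exists T0; rewrite T0_ncs eqxx.
case: (ex_minnP sizes) => v /existsP[Tv /andP[Tv_ncs /eqP Tv_card]] v_min.
have v_le T : nbhd_cover_stable e T -> (v <= #|T|)%N.
  by move=> ncsT; apply: v_min; apply/existsP; exists T; rewrite ncsT eqxx.
have v_le_beta : (v <= beta e)%N := leq_trans (v_le _ T0_ncs) T0_le.
exists v; split; [split | split=> //; split=> [v_beta | stars]].
- by rewrite -Tv_card; apply: vnum_at_nbhd_cover_stable.
- by move=> d /(stable_of_vnum_at e_sym e_irr)[T /v_le]; apply: leq_trans.
- by apply: star_components_of_beta_le => // T; rewrite -v_beta; apply: v_le.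
- apply/eqP; rewrite eqn_leq v_le_beta -Tv_card.
  by apply: beta_le_of_star_components => //; case/andP: Tv_ncs.
Qed.
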